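(* Let $V_\theta$ be a real vector space of finite dimension $D\ge1$ and let $M\subset V_\theta\times[0,1]$ be a dichotomous item response hypersurface with associated function $f:V_\theta\to[0,1]$. Then for every $w\in V_\theta$ there exists an affine hyperplane $H_w\subset V_\theta$ (of dimension $D-1$) with $w\in H_w$ such that the restriction of $f$ to $H_w$ is constant.
   Context: A dichotomous item response hypersurface (IRHS) is a $D=\dim V_\theta$ dimensional smooth submanifold $M$ of $V_\theta\times[0,1]$ such that for any two vectors $v,w\in V_\theta$, the intersection of $(w+\mathbb{R}\cdot v)\times[0,1]$ with $M$ is the graph of a monotonic function $w+\mathbb{R}\cdot v\to[0,1]$, where $w+\mathbb{R}\cdot v=\{w+\lambda v:\lambda\in\mathbb{R}\}$. A function $g:w+\mathbb{R}\cdot v\to[0,1]$ is monotonic if either $g(w+\lambda v)\le g(w+\mu v)$ for all $\lambda\le\mu$, or $g(w+\lambda v)\ge g(w+\mu v)$ for all $\lambda\le\mu$. Taking $v=0$ shows $M$ is the graph of a function $f:V_\theta\to[0,1]$, the associated function. *)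

From HB Require Import structures.
From mathcomp Require Import all_boot all_order all_algebra.
From mathcomp Require Import all_classical all_reals all_analysis.
Set Implicit Arguments. Unset Strict Implicit. Unset Printing Implicit Defensive.
Import Order.TTheory GRing.Theory Num.Theory.
Import numFieldNormedType.Exports.
Local Open Scope classical_set_scope.
Local Open Scope ring_scope.

Fixpoint Ck (R : realType) (V : normedModType R) (k : nat) (g : V -> R) : Prop :=
  match k with
  | 0 => continuous g
  | k'.+1 => (forall x v, derivable g x v) /\ forall v, Ck k' (fun x => derive g x v)
  end.

Definition smooth (R : realType) (V : normedModType R) (g : V -> R) : Prop :=
  forall k, Ck k g.

Definition smooth_hypersurface (R : realType) (W : normedModType R)
    (M : set W) : Prop :=
  forall p, M p ->
    exists (U : set W) (g : W -> R),
      [/\ open U, U p, smooth g,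
          (forall q, U q -> (M q <-> g q = 0)) &
          exists v : W, derive g p v != 0].

Definition monotonic (R : realType) (g : R -> R) : Prop :=
  (forall l m, l <= m -> g l <= g m) \/ (forall l m, l <= m -> g m <= g l).

(* Dichotomous item response hypersurface in V_theta x [0,1],
   with V_theta = 'rV[R]_D (a real vector space of dimension D). *)
Definition IRHS (R : realType) (D : nat) (M : set ('rV[R]_D * R)) : Prop :=
  [/\ M `<=` [set p | 0 <= p.2 <= 1],
      smooth_hypersurface M &
      forall v w : 'rV[R]_D, exists g : R -> R,
        monotonic g /\
        forall (l : R) (y : R), M (w + l *: v, y) <-> y = g l].

From HB Require Import structures.
From mathcomp Require Import all_boot all_order all_algebra.
From mathcomp Require Import all_classical all_reals all_analysis.
From mathcomp Require Import ring lra.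
Set Implicit Arguments. Unset Strict Implicit. Unset Printing Implicit Defensive.
Import Order.TTheory GRing.Theory Num.Theory.
Import numFieldNormedType.Exports.
Local Open Scope classical_set_scope.
Local Open Scope ring_scope.

(* Along every line [f] is monotonic, so its strict sublevel and superlevel
   sets at [w] are convex, and the cone they generate, the superlevel part
   negated, avoids the origin.  Separating this cone from the origin gives a
   nonzero [a] with the sublevel set on one side of the hyperplane
   [(x - w) *m a^T = 0] and the superlevel set on the other.  Smoothness of the
   hypersurface forbids [f] to jump over a level along a line, which makes both
   sets open along lines, so neither meets the hyperplane.  A jump is excluded
   as follows: if the local defining function of the hypersurface has a nonzero
   vertical derivative at the jump, [f] is continuous there; otherwise a level
   close to the value at the jump point is attained on both sides of the
   jumping line, which monotonicity in the plane they span forbids. *)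

(** * Separation of convex cones *)

Section DotProduct.
Variable R : realType.

Definition dotr n (u v : 'rV[R]_n) : R := (u *m v^T) 0 0.

Lemma dotrDl n (u1 u2 v : 'rV[R]_n) : dotr (u1 + u2) v = dotr u1 v + dotr u2 v.
Proof. by rewrite /dotr mulmxDl mxE. Qed.

Lemma dotrZl n t (u v : 'rV[R]_n) : dotr (t *: u) v = t * dotr u v.
Proof. by rewrite /dotr -scalemxAl mxE. Qed.

Lemma dotrNl n (u v : 'rV[R]_n) : dotr (- u) v = - dotr u v.
Proof. by rewrite -scaleN1r dotrZl mulN1r. Qed.

Lemma dotr_row n (s1 s2 : 'rV[R]_1) (u1 u2 : 'rV[R]_n) :
  dotr (row_mx s1 u1) (row_mx s2 u2) = s1 0 0 * s2 0 0 + dotr u1 u2.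
Proof.
by rewrite /dotr tr_row_mx mul_row_col mxE [(s1 *m _) 0 0]mxE big_ord1 mxE.
Qed.

Lemma dotr_gt0 n (u : 'rV[R]_n) : u != 0 -> 0 < dotr u u.
Proof.
move=> u0; have [i ui] : exists i, u 0 i != 0.
  apply/existsP; apply: contraNT u0; rewrite negb_exists => /forallP u0.
  by apply/eqP/rowP => i; rewrite mxE; apply/eqP/negPn/u0.
rewrite /dotr mxE (bigD1 i) //= ltr_pwDl //.
  by rewrite !mxE -expr2 exprn_even_gt0.
by apply: sumr_ge0 => j _; rewrite !mxE -expr2 sqr_ge0.
Qed.

End DotProduct.

Definition convex_cone (R : numDomainType) (V : lmodType R) (K : set V) :=
  (forall x y, K x -> K y -> K (x + y)) /\
  (forall t x, 0 < t -> K x -> K (t *: x)).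

Lemma sup_interpolant (R : realType) (P Q : set R) :
  P !=set0 -> Q !=set0 -> (forall x y, P x -> Q y -> x <= y) ->
  exists a, (forall x, P x -> x <= a) /\ (forall y, Q y -> a <= y).
Proof.
move=> P0 [y0 Qy0] PQ.
have Pub : has_ubound P by exists y0 => x Px; exact: PQ.
exists (sup P); split; first exact: ub_le_sup.
by move=> y Qy; apply: ge_sup => // x Px; exact: PQ.
Qed.

Section ConeSeparation.
Variables (R : realType) (n : nat) (K : set 'rV[R]_(1 + n)).
Hypothesis coneK : convex_cone K.

Let head (z : 'rV[R]_(1 + n)) := lsubmx z 0 0.

Lemma dotr_head (z : 'rV[R]_(1 + n)) s a :
  dotr z (row_mx s%:M a) = head z * s + dotr (rsubmx z) a.
Proof. by rewrite -{1}(hsubmxK z) dotr_row [s%:M _ _]mxE mulr1n. Qed.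

Lemma head_eq0 z : head z = 0 -> z = row_mx 0 (rsubmx z).
Proof.
move=> h0; rewrite -{1}(hsubmxK z); congr row_mx.
by apply/rowP => i; rewrite ord1 mxE [RHS]mxE -h0 /head mxE.
Qed.

Let slice := [set z' | K (row_mx 0 z')].

Lemma slice_mix p q : K p -> K q -> 0 < head p -> head q < 0 ->
  slice (rsubmx ((- head q) *: p + head p *: q)).
Proof.
move=> Kp Kq hp hq; rewrite /slice /= -head_eq0; last first.
  by rewrite /head !mxE; ring.
by case: coneK => KD KZ; apply: KD; apply: KZ => //; rewrite oppr_gt0.
Qed.

Lemma cone_separation_step :
  (slice !=set0 -> exists2 a, a != 0 & forall z, slice z -> 0 <= dotr z a) ->
  exists2 a, a != 0 & forall z, K z -> 0 <= dotr z a.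
Proof.
move=> sep_slice.
have e0_neq0 (s : R) : s != 0 -> row_mx s%:M (0 : 'rV_n) != 0.
  move=> s0; rewrite row_mx_eq0 negb_and; apply/orP; left.
  by apply: contra s0 => /eqP/matrixP/(_ 0 0); rewrite !mxE => /eqP.
have [[q Kq hq]|hq] := pselect (exists2 q, K q & head q < 0); last first.
  exists (row_mx 1%:M 0); first exact/e0_neq0/oner_neq0.
  move=> z Kz; rewrite dotr_head mulr1 /dotr trmx0 mulmx0 mxE addr0.
  by rewrite leNgt; apply/negP => hz; apply: hq; exists z.
have [[p Kp hp]|hp] := pselect (exists2 p, K p & 0 < head p); last first.
  exists (row_mx (-1)%:M 0); first by apply: e0_neq0; rewrite oppr_eq0 oner_neq0.
  move=> z Kz; rewrite dotr_head mulrN1 /dotr trmx0 mulmx0 mxE addr0 oppr_ge0.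
  by rewrite leNgt; apply/negP => hz; apply: hp; exists z.
have [a a0 slice_a] := sep_slice (ex_intro _ _ (slice_mix Kp Kq hp hq)).
pose lo := [set - dotr (rsubmx z) a / head z | z in [set z | K z /\ 0 < head z]].
pose hi := [set dotr (rsubmx z) a / - head z | z in [set z | K z /\ head z < 0]].
have [al [lo_al al_hi]] : exists al, (forall x, lo x -> x <= al) /\
                                     (forall y, hi y -> al <= y).
  apply: sup_interpolant; first by exists (- dotr (rsubmx p) a / head p), p.
    by exists (dotr (rsubmx q) a / - head q), q.
  move=> _ _ [z1 [K1 h1] <-] [z2 [K2 h2] <-].
  have := slice_a _ (slice_mix K1 K2 h1 h2).
  rewrite linearD !linearZ /= dotrDl !dotrZl => mix_ge0.
  have h2' : 0 < - head z2 by rewrite oppr_gt0.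
  rewrite ler_pdivrMr // mulrC mulrA ler_pdivlMr //; nra.
exists (row_mx al%:M a); first by rewrite row_mx_eq0 negb_and a0 orbT.
move=> z Kz; rewrite dotr_head.
have [hz|hz|hz] := ltgtP (head z) 0.
- have := al_hi _ (ex_intro2 _ _ z (conj Kz hz) erefl).
  by rewrite ler_pdivlMr ?oppr_gt0 //; nra.
- have := lo_al _ (ex_intro2 _ _ z (conj Kz hz) erefl).
  by rewrite ler_pdivrMr //; nra.
- by rewrite hz mul0r add0r; apply: slice_a; rewrite /slice /= -head_eq0.
Qed.

End ConeSeparation.

Theorem cone_separation (R : realType) n (K : set 'rV[R]_n.+1) :
  convex_cone K -> ~ K 0 ->
  exists2 a, a != 0 & forall z, K z -> 0 <= dotr z a.
Proof.
elim: n K => [|n IH] K coneK K0; apply: cone_separation_step => //.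
  by move=> [z' /=]; rewrite thinmx0 row_mx0.
move=> _; apply: IH; last by rewrite /= row_mx0.
case: coneK => KD KZ; split => [x y Kx Ky|t x t0 Kx] /=.
  by rewrite -[X in row_mx X _](addr0 0) -add_row_mx; exact: KD.
by rewrite -[X in row_mx X _](scaler0 _ t) -scale_row_mx; exact: KZ.
Qed.

(** * Functions monotonic along lines *)

Section MonotonicFunctions.
Variable R : realType.
Implicit Type g : R -> R.

Lemma monotonic_between g (l t m : R) : monotonic g -> l <= t <= m ->
  (g l <= g t <= g m) \/ (g m <= g t <= g l).
Proof. by move=> [] mono /andP[lt tm]; [left|right]; rewrite !mono. Qed.

Lemma monotonic_opposite g (s t : R) : monotonic g -> s * t < 0 ->
  (g s <= g 0 <= g t) \/ (g t <= g 0 <= g s).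
Proof.
move=> mono st; have [s0|s0] := ltP s 0.
  by apply: monotonic_between => //; rewrite ltW //=; nra.
have : t <= 0 <= s by rewrite s0 andbT; nra.
by move=> /(monotonic_between mono) []; [right|left].
Qed.

End MonotonicFunctions.

Definition plane_monotonic (R : realType) (F : R -> R -> R) :=
  forall a b al be : R, monotonic (fun t : R => F (a + t * al) (b + t * be)).

Section PlaneFunctions.
Variables (R : realType) (F : R -> R -> R).
Hypothesis F_mono : plane_monotonic F.

Lemma plane_monotonic_reflect : plane_monotonic (fun a b => F (- a) b).
Proof.
move=> a b al be; have := F_mono (- a) b (- al) be.
by congr monotonic; apply: funext => t; congr F; ring.
Qed.

Lemma plane_level_convex a1 b1 a2 b2 c (l : R) : 0 <= l <= 1 ->
  F a1 b1 = c -> F a2 b2 = c -> F (a1 + l * (a2 - a1)) (b1 + l * (b2 - b1)) = c.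
Proof.
move=> /(monotonic_between (F_mono a1 b1 (a2 - a1) (b2 - b1))).
rewrite !mul0r !addr0 !mul1r ![_ + (_ - _)]addrC !subrK.
by move=> [] /andP[h1 h2] e1 e2; lra.
Qed.

(* A segment joining the two level points would cross the line [b = 0]. *)
Lemma plane_level_same_side (c t1 t2 : R) : (forall s, F s 0 != c) ->
  F 1 t1 = c -> F (-1) t2 = c -> 0 < t1 * t2.
Proof.
move=> avoid F1 F2; rewrite ltNge; apply/negP => t12_le0.
have [l l01 l_root] : exists2 l, 0 <= l <= 1 & t1 + l * (t2 - t1) = 0.
  have [e|t21] := eqVneq t2 t1.
    by exists 0; [rewrite lexx ler01 | rewrite e in t12_le0; nra].
  pose l := t1 / (t1 - t2).
  have t12_neq0 : t1 - t2 != 0 by rewrite subr_eq0 eq_sym.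
  have lD : l * (t1 - t2) = t1 by rewrite divfK.
  have D2 : 0 < (t1 - t2) * (t1 - t2) by rewrite -expr2 exprn_even_gt0.
  by exists l; [apply/andP; split; nra | nra].
have := plane_level_convex l01 F1 F2; rewrite l_root.
by move/eqP; apply/negP.
Qed.

(* On the line [a = 1], [F 1 (- t2)] lies beyond [F 1 0] as seen from
   [F 1 t1 = c]; and [(0, 0)] is the midpoint of [(1, - t2)] and [(-1, t2)]. *)
Lemma plane_level_pinch (c t1 t2 : R) : 0 < t1 * t2 ->
  F 1 t1 = c -> F (-1) t2 = c -> 0 <= (F 1 0 - c) * (F 0 0 - c).
Proof.
move=> t12 F1 F2.
have t1_opp : t1 * - t2 < 0 by rewrite mulrN oppr_lt0.
have := monotonic_opposite (F_mono 1 0 0 1) t1_opp.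
rewrite !(mulr0, addr0, mulr1, add0r) F1 => h1.
have := monotonic_between (F_mono 0 0 (-1) t2) (l := -1) (t := 0) (m := 1).
rewrite !(mulr0, addr0, mulr1, add0r, mul1r, mulN1r, opprK, mul0r) F2 lerN10 ler01.
move=> /(_ isT) h2.
by case: h1 => /andP[? ?]; case: h2 => /andP[? ?]; nra.
Qed.

End PlaneFunctions.

Section WeightedCombination.
Variables (R : realFieldType) (V : lmodType R).

Lemma scale_weighted (l1 l2 : R) (x1 x2 : V) : 0 <= l1 -> 0 <= l2 ->
  (l1 + l2) *: (x1 + (l2 / (l1 + l2)) *: (x2 - x1)) = l1 *: x1 + l2 *: x2.
Proof.
move=> l10 l20; have [l0|l0] := ltrP 0 (l1 + l2); last first.
  have [-> ->] : l1 = 0 /\ l2 = 0 by split; lra.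
  by rewrite add0r !scale0r addr0.
rewrite scalerDr scalerA mulrC divfK ?gt_eqF // scalerBr scalerDl.
by rewrite addrACA subrr addr0.
Qed.

Lemma weighted_mem (C : set V) (l1 l2 : R) (x1 x2 : V) :
  (forall x y t, 0 <= t <= 1 -> C x -> C y -> C (x + t *: (y - x))) ->
  0 <= l1 -> 0 <= l2 -> 0 < l1 + l2 -> (0 < l1 -> C x1) -> (0 < l2 -> C x2) ->
  C (x1 + (l2 / (l1 + l2)) *: (x2 - x1)).
Proof.
move=> convC l10 l20 l0 Cx1 Cx2.
have [l1_gt0|l1_le0] := ltrP 0 l1; last first.
  have -> : l1 = 0 by lra.
  rewrite add0r divff ?gt_eqF ?scale1r ?[x1 + _]addrC ?subrK //; last by lra.
  by apply: Cx2; lra.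
have [l2_gt0|l2_le0] := ltrP 0 l2; last first.
  have -> : l2 = 0 by lra.
  by rewrite mul0r scale0r addr0; exact: Cx1.
apply: convC; [|exact: Cx1|exact: Cx2].
apply/andP; split; first exact/divr_ge0/ltW.
by rewrite ler_pdivrMr // mul1r; lra.
Qed.

End WeightedCombination.

Section MonotonicAlongLines.
Variables (R : realType) (V : lmodType R) (f : V -> R).
Hypothesis f_mono : forall x d, monotonic (fun t => f (x + t *: d)).

Lemma plane_monotonic_restrict x0 d u :
  plane_monotonic (fun a b => f (x0 + a *: d + b *: u)).
Proof.
move=> a b al be; have := f_mono (x0 + a *: d + b *: u) (al *: d + be *: u).
congr monotonic; apply: funext => t; congr f.
rewrite scalerDr !scalerDl !scalerA !addrA; congr (_ + _).
by rewrite addrAC.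
Qed.

Lemma translate_segment_between w x y (t : R) : 0 <= t <= 1 ->
  f (w + x) <= f (w + (x + t *: (y - x))) <= f (w + y) \/
  f (w + y) <= f (w + (x + t *: (y - x))) <= f (w + x).
Proof.
have -> : y - x = (w + y) - (w + x) by rewrite opprD addrACA subrr add0r.
move=> /(monotonic_between (f_mono (w + x) ((w + y) - (w + x)))).
by rewrite scale0r addr0 scale1r [_ + (_ - _)]addrC subrK addrA.
Qed.

(* Generated by the strict sublevel set and the negated strict superlevel set
   at [w], translated by [- w]; a point only matters when its weight is
   positive, so either set may be empty. *)
Definition level_cone w : set V := [set z | exists l m x y,
  [/\ 0 <= l, 0 <= m, 0 < l + m, (0 < l -> f (w + x) < f w) &
      (0 < m -> f w < f (w + y)) /\ z = l *: x - m *: y]].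

Lemma level_cone_convex w : convex_cone (level_cone w).
Proof.
pose A := [set x | f (w + x) < f w]; pose B := [set y | f w < f (w + y)].
have convA x y t : 0 <= t <= 1 -> A x -> A y -> A (x + t *: (y - x)).
  by rewrite /A /=; move=> /(translate_segment_between w x y) [] /andP[] *; lra.
have convB x y t : 0 <= t <= 1 -> B x -> B y -> B (x + t *: (y - x)).
  by rewrite /B /=; move=> /(translate_segment_between w x y) [] /andP[] *; lra.
split.
  move=> _ _ [l1 [m1 [x1 [y1 [l10 m10 s1 A1 [B1 ->]]]]]]
         [l2 [m2 [x2 [y2 [l20 m20 s2 A2 [B2 ->]]]]]].
  exists (l1 + l2), (m1 + m2), (x1 + (l2 / (l1 + l2)) *: (x2 - x1)),
         (y1 + (m2 / (m1 + m2)) *: (y2 - y1)).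
  split; [lra | lra | lra | by move=> l0; exact: (weighted_mem convA) | split].
    by move=> m0; exact: (weighted_mem convB).
  by rewrite !scale_weighted // opprD addrACA.
move=> t _ t0 [l [m [x [y [l0 m0 s Ax [By ->]]]]]].
exists (t * l), (t * m), x, y; split.
- by rewrite mulr_ge0 // ltW.
- by rewrite mulr_ge0 // ltW.
- by rewrite -mulrDr mulr_gt0.
- by move=> tl; apply: Ax; rewrite -(pmulr_rgt0 _ t0).
split; first by move=> tm; apply: By; rewrite -(pmulr_rgt0 _ t0).
by rewrite scalerBr !scalerA.
Qed.

Lemma level_cone0 w : ~ level_cone w 0.
Proof.
move=> [l [m [x [y [l0 m0 s Ax [By /esym/eqP]]]]]].
rewrite subr_eq0 => /eqP lxmy.
have [l_gt0|l_le0] := ltrP 0 l; last first.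
  move: lxmy; have -> : l = 0 by lra.
  rewrite scale0r => /esym/eqP; rewrite scaler_eq0 gt_eqF /=; last by lra.
  by move=> /eqP y0; have := By ltac:(lra); rewrite y0 addr0 ltxx.
have [m_gt0|m_le0] := ltrP 0 m; last first.
  move: lxmy; have -> : m = 0 by lra.
  rewrite scale0r => /eqP; rewrite scaler_eq0 gt_eqF //= => /eqP x0.
  by have := Ax l_gt0; rewrite x0 addr0 ltxx.
have ey : y = (l / m) *: x.
  by rewrite [l / m]mulrC -scalerA lxmy scalerA mulVf ?gt_eqF // scale1r.
have := Ax l_gt0; have := By m_gt0; rewrite ey.
case: (f_mono w x) => mono.
  by have := mono 0 1 ler01; rewrite scale0r addr0 scale1r; lra.
have := mono 0 (l / m) (ltW (divr_gt0 l_gt0 m_gt0)).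
by rewrite scale0r addr0; lra.
Qed.

Lemma sublevel_in_level_cone w x : f (w + x) < f w -> level_cone w x.
Proof.
move=> fx; exists 1, 0, x, 0; rewrite scale1r scale0r subr0 addr0.
by split; rewrite ?ler01 ?lexx ?ltr01 ?ltxx.
Qed.

Lemma superlevel_in_level_cone w y : f w < f (w + y) -> level_cone w (- y).
Proof.
move=> fy; exists 0, 1, 0, y; rewrite scale1r scale0r sub0r add0r.
by split; rewrite ?ler01 ?lexx ?ltr01 ?ltxx.
Qed.

Definition skips_level x e c := [/\ f x != c,
  forall t : R, t < 0 -> f (x + t *: e) < c &
  forall t : R, 0 < t -> c < f (x + t *: e)].

Lemma skipped_level_near x e c : skips_level x e c ->
  forall r : R, 0 < r -> exists2 c', skips_level x e c' & `|c' - f x| < r.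
Proof.
move=> [fxc neg pos] r r0.
have [inc|dec] := f_mono x e; last first.
  have := dec (-1) 1; have := neg (-1); have := pos 1; lra.
have left_le t : t < 0 -> f (x + t *: e) <= f x.
  by move=> t0; have := inc t 0 (ltW t0); rewrite scale0r addr0.
have right_ge t : 0 < t -> f x <= f (x + t *: e).
  by move=> t0; have := inc 0 t (ltW t0); rewrite scale0r addr0.
have [fx_lt|fx_gt|fx_eq] := ltgtP (f x) c; last by rewrite fx_eq eqxx in fxc.
- pose h := Num.min (r / 2) ((c - f x) / 2).
  have h0 : 0 < h by rewrite lt_min !divr_gt0 // subr_gt0.
  have [hr hc] : h <= r / 2 /\ h <= (c - f x) / 2
    by split; rewrite /h ge_min lexx ?orbT.
  exists (f x + h); last by rewrite addrAC subrr add0r gtr0_norm //; lra.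
  split; first by apply/eqP; lra.
    by move=> t /left_le; lra.
  by move=> t /pos; lra.
- pose h := Num.min (r / 2) ((f x - c) / 2).
  have h0 : 0 < h by rewrite lt_min !divr_gt0 // subr_gt0.
  have [hr hc] : h <= r / 2 /\ h <= (f x - c) / 2
    by split; rewrite /h ge_min lexx ?orbT.
  exists (f x - h); last by rewrite addrAC subrr add0r normrN gtr0_norm //; lra.
  split; first by apply/eqP; lra.
    by move=> t /neg; lra.
  by move=> t /right_ge; lra.
Qed.

(* In the plane coordinates both level points lie on the same side of the
   line; pinching from each of them puts [f x] on both sides of [c]. *)
Lemma skipped_level_one_side x e u c (r t1 t2 : R) : skips_level x e c -> 0 < r ->
  f (x + r *: e + t1 *: u) = c -> f (x - r *: e + t2 *: u) = c -> False.
Proof.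
move=> [fxc neg pos] r0 E1 E2.
pose F a b := f (x + a *: (r *: e) + b *: u).
have F_mono : plane_monotonic F := plane_monotonic_restrict x (r *: e) u.
have F1 : F 1 t1 = c by rewrite /F scale1r.
have F2 : F (-1) t2 = c by rewrite /F scaleN1r.
have F_line (a : R) : F a 0 = f (x + (a * r) *: e) by rewrite /F scale0r addr0 scalerA.
have avoid (a : R) : F a 0 != c.
  rewrite F_line; have [ar|ar|->] := ltgtP (a * r) 0; last by rewrite scale0r addr0.
  - by rewrite lt_eqF ?neg.
  - by rewrite gt_eqF ?pos.
have t12 := plane_level_same_side F_mono avoid F1 F2.
have t21 : 0 < t2 * t1 by rewrite mulrC.
have F1' : F (- -1) t1 = c by rewrite opprK.
have pinch1 := plane_level_pinch F_mono t12 F1 F2.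
have /= pinch2 := plane_level_pinch (plane_monotonic_reflect F_mono) t21 F2 F1'.
have hp : c < F 1 0 by rewrite F_line mul1r; exact: pos.
have hn : F (-1) 0 < c by rewrite F_line mulN1r; apply: neg; rewrite oppr_lt0.
have h0 : F 0 0 = f x by rewrite F_line mul0r scale0r addr0.
move: fxc pinch2; rewrite oppr0 -h0 neq_lt => /orP[] ? ?; nra.
Qed.

Hypothesis f_noskip : forall x e c, ~ skips_level x e c.

Lemma sublevel_ray x d c : f x < c -> exists2 e : R, 0 < e & f (x + e *: d) < c.
Proof.
move=> fxc; apply: contrapT => no_e.
have ge_c e : 0 < e -> c <= f (x + e *: d).
  by move=> e0; rewrite leNgt; apply/negP => ?; apply: no_e; exists e.
have [inc|dec] := f_mono x d; last first.
  by have := dec 0 1 ler01; have := ge_c 1 ltr01; rewrite scale0r addr0; lra.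
apply: (@f_noskip x d ((f x + c) / 2)); split.
- by apply/eqP => ?; lra.
- by move=> t t0; have := inc t 0 (ltW t0); rewrite scale0r addr0; lra.
- by move=> t t0; have := ge_c t t0; lra.
Qed.

Lemma superlevel_ray x d c : c < f x -> exists2 e : R, 0 < e & c < f (x + e *: d).
Proof.
move=> fxc; apply: contrapT => no_e.
have le_c e : 0 < e -> f (x + e *: d) <= c.
  by move=> e0; rewrite leNgt; apply/negP => ?; apply: no_e; exists e.
have [inc|dec] := f_mono x d.
  by have := inc 0 1 ler01; have := le_c 1 ltr01; rewrite scale0r addr0; lra.
apply: (@f_noskip x (- d) ((f x + c) / 2)); split.
- by apply/eqP => ?; lra.
- move=> t t0; rewrite scalerN -scaleNr.
  by have := le_c (- t); rewrite oppr_gt0 => /(_ t0); lra.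
- move=> t t0; rewrite scalerN -scaleNr.
  by have := dec (- t) 0; rewrite scale0r addr0 oppr_le0 => /(_ (ltW t0)); lra.
Qed.

End MonotonicAlongLines.

Theorem level_set_contains_hyperplane (R : realType) n (f : 'rV[R]_n.+1 -> R) :
  (forall x d, monotonic (fun t => f (x + t *: d))) ->
  (forall x e c, ~ skips_level f x e c) ->
  forall w, exists2 a, a != 0 & forall x, dotr (x - w) a = 0 -> f x = f w.
Proof.
move=> f_mono f_noskip w.
have [a a0 a_sep] :=
  cone_separation (level_cone_convex f_mono w) (level_cone0 f_mono (w := w)).
exists a => // x xa; have aa := dotr_gt0 a0.
have [fx|fx|//] := ltgtP (f x) (f w).
- have [e e0 fe] := sublevel_ray f_mono f_noskip (- a) fx.
  have /a_sep : level_cone f w (x + e *: - a - w).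
    by apply: sublevel_in_level_cone; rewrite [w + _]addrC subrK.
  by rewrite addrAC dotrDl dotrZl dotrNl xa; nra.
- have [e e0 fe] := superlevel_ray f_mono f_noskip a fx.
  have /a_sep : level_cone f w (- (x + e *: a - w)).
    by apply: superlevel_in_level_cone; rewrite [w + _]addrC subrK.
  by rewrite dotrNl addrAC dotrDl dotrZl xa; nra.
Qed.

(** * Directional derivatives *)

Section DirectionalDerivatives.
Variables (R : realType) (W : normedModType R).
Implicit Types (g : W -> R) (p v : W).

Lemma derive_along_line g v q (x : R) : derivable g (x *: v + q) v ->
  is_derive x 1 (fun s : R => g (s *: v + q)) ('D_v g (x *: v + q)).
Proof.
move=> dg.
have E : (fun h : R => h^-1 *: (((fun s : R => g (s *: v + q)) \o shift x) (h *: 1)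
             - g (x *: v + q)))
       = (fun h : R => h^-1 *: ((g \o shift (x *: v + q)) (h *: v) - g (x *: v + q))).
  by apply: funext => h /=; rewrite /shift /= [h *: 1]mulr1 scalerDl addrA.
by apply: DeriveDef; [rewrite /derivable E | rewrite /derive E].
Qed.

Lemma MVT_origin (psi df : R -> R) (t : R) :
  (forall x : R, is_derive x 1 psi (df x)) ->
  exists c, `|c| <= `|t| /\ psi t - psi 0 = df c * t.
Proof.
move=> hd; have psi_cont : continuous psi.
  move=> x; apply: differentiable_continuous; apply/derivable1_diffP.
  by case: (hd x).
have [t_le0|t_gt0] := leP t 0.
- have [c cI e] :=
    MVT_segment t_le0 (fun x _ => hd x) (continuous_subspaceT psi_cont).
  exists c; move: cI; rewrite in_itv /= => /andP[c1 c2]; split.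
    rewrite (ler0_norm t_le0) ler_norml opprK c1 /=.
    by apply: le_trans c2 _; rewrite oppr_ge0.
  by rewrite -opprB e sub0r mulrN opprK.
- have [c cI e] :=
    MVT_segment (ltW t_gt0) (fun x _ => hd x) (continuous_subspaceT psi_cont).
  exists c; move: cI; rewrite in_itv /= => /andP[c1 c2]; split.
    rewrite (gtr0_norm t_gt0) ler_norml c2 andbT.
    by apply: le_trans c1; rewrite oppr_le0 ltW.
  by rewrite e subr0.
Qed.

Section ContinuouslyDifferentiable.
Variable g : W -> R.
Hypotheses (g_der : forall x v, derivable g x v)
  (dg_cont : forall v, continuous (fun x => 'D_v g x)).

Lemma increment_quotient_cvg p v1 v2 :
  (fun t : R => t^-1 * (g (t *: (v1 + v2) + p) - g (t *: v1 + p))) @ 0^' -->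
  'D_v2 g p.
Proof.
apply/cvgrPdist_lt => e e0.
have /cvgrPdist_lt/(_ e e0)/nbhs_normP [r r0 near_p] := @dg_cont v2 p.
have k0 : 0 < `|v1| + `|v2| + 1 by rewrite ltr_wpDl // addr_ge0.
near=> t.
have t0 : t != 0 by near: t; apply: nbhs_dnbhs_neq.
have tr : `|t| < r / (`|v1| + `|v2| + 1).
  by near: t; apply: dnbhs0_lt; exact: divr_gt0.
have [c [ct]] := MVT_origin t
  (fun x => derive_along_line (@g_der (x *: v2 + (t *: v1 + p)) v2)).
rewrite /= scale0r add0r => ec.
have -> : t *: (v1 + v2) + p = t *: v2 + (t *: v1 + p).
  by rewrite addrCA addrA scalerDr.
rewrite ec mulrCA mulVf // mulr1; apply: near_p => /=.
rewrite addrA distrC addrK.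
apply: (le_lt_trans (ler_normD _ _)); rewrite !normrZ.
rewrite ltr_pdivlMr // in tr.
have := normr_ge0 v1; have := normr_ge0 v2; have := normr_ge0 c; nra.
Unshelve. all: by end_near.
Qed.

Lemma derive_dirD p v1 v2 : 'D_(v1 + v2) g p = 'D_v1 g p + 'D_v2 g p.
Proof.
rewrite [in LHS]/derive; apply: cvg_lim => //.
have -> : (fun h : R => h^-1 *: ((g \o shift p) (h *: (v1 + v2)) - g p)) =
    (fun h : R => h^-1 *: ((g \o shift p) (h *: v1) - g p)) +
    (fun t : R => t^-1 * (g (t *: (v1 + v2) + p) - g (t *: v1 + p))).
  apply: funext => h; rewrite /= /shift /= -mulrDr.
  by rewrite [X in _ * X]addrC addrA subrK.
by apply: cvgD; [exact: g_der | exact: increment_quotient_cvg].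
Qed.

End ContinuouslyDifferentiable.

Lemma derive_sign_change g p v : g p = 0 -> derivable g p v -> 'D_v g p != 0 ->
  forall d : R, 0 < d ->
  exists2 t : R, 0 < t <= d & g (t *: v + p) * g ((- t) *: v + p) < 0.
Proof.
move=> g0 dg Dv0 d d0; set D := 'D_v g p.
have dq : (fun t : R => t^-1 * g (t *: v + p) * D) @ 0^' --> D * D.
  apply: cvgM; last exact: cvg_cst.
  have -> : (fun t : R => t^-1 * g (t *: v + p)) =
            (fun t : R => t^-1 *: ((g \o shift p) (t *: v) - g p)).
    by apply: funext => t; rewrite /= /shift /= g0 subr0.
  exact: dg.
have DD : 0 < D * D by rewrite -expr2 exprn_even_gt0.
have [e e0 near0] : exists2 e : R, 0 < e &
    forall t, `|t| < e -> t != 0 -> 0 < t^-1 * g (t *: v + p) * D.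
  have : \forall t \near (0 : R), t != 0 -> 0 < t^-1 * g (t *: v + p) * D.
    exact: cvgr_gt _ dq 0 DD.
  move=> /nbhs_normP [e e0 H]; exists e => // t te; apply: H.
  by rewrite /= sub0r normrN.
pose t := Num.min d (e / 2).
have t0 : 0 < t by rewrite lt_min d0 divr_gt0.
have te : `|t| < e by rewrite gtr0_norm // gt_min; apply/orP; right; lra.
have qp := near0 t te (lt0r_neq0 t0).
have qm := near0 (- t) ltac:(by rewrite normrN) ltac:(by rewrite oppr_eq0 lt0r_neq0).
have q2 : 0 < (t^-1 * g (t *: v + p)) * ((- t)^-1 * g ((- t) *: v + p)).
  by have := mulr_gt0 qp qm; rewrite mulrACA pmulr_lgt0.
have tt : 0 < t * t by rewrite mulr_gt0.
exists t; first by rewrite t0 ge_min lexx.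
set gP := g (t *: v + p); set gM := g ((- t) *: v + p).
have -> : gP * gM = - (t * t) * ((t^-1 * gP) * ((- t)^-1 * gM)).
  by field; exact: lt0r_neq0.
by rewrite mulNr oppr_lt0 mulr_gt0.
Qed.

Lemma zero_crossing_near g p v (t0 : R) : continuous g -> 0 <= t0 ->
  g (t0 *: v + p) * g ((- t0) *: v + p) < 0 ->
  exists2 r : R, 0 < r & forall z, `|z| < r ->
    exists2 t, - t0 <= t <= t0 & g (t *: v + (z + p)) = 0.
Proof.
move=> gc t00 neg.
have shift_cvg (s : R) :
    g (s *: v + (z + p)) @[z --> (0 : W)] --> g (s *: v + (0 + p)).
  apply: continuous_comp; last exact: gc.
  by apply: cvgD; [exact: cvg_cst | apply: cvgD; [exact: cvg_id | exact: cvg_cst]].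
rewrite -[p]add0r in neg.
have : \forall z \near (0 : W),
    g (t0 *: v + (z + p)) * g ((- t0) *: v + (z + p)) < 0.
  exact: cvgr_lt _ (cvgM (shift_cvg t0) (shift_cvg (- t0))) 0 neg.
move=> /nbhs_normP [r r0 near0].
exists r => // z zr.
have /= neg_z := near0 z ltac:(by rewrite /= sub0r normrN).
have line_cont : continuous (fun s : R => g (s *: v + (z + p))).
  move=> s; apply: continuous_comp; last exact: gc.
  by apply: cvgD; [exact: scalel_continuous | exact: cvg_cst].
pose phi s := g (s *: v + (z + p)).
have mid : Num.min (phi (- t0)) (phi t0) <= 0 <= Num.max (phi (- t0)) (phi t0).
  rewrite ge_min le_max /phi.
  have [gP|gP] := lerP 0 (g (t0 *: v + (z + p))).
    by rewrite (_ : g ((- t0) *: v + (z + p)) <= 0) ?orbT //; nra.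
  by rewrite (_ : 0 <= g ((- t0) *: v + (z + p))) ?orbT //; nra.
have [t] := IVT (ltac:(lra) : - t0 <= t0) (continuous_subspaceT line_cont) mid.
by rewrite in_itv /= => t_in phit; exists t.
Qed.

Lemma local_zero_along g (U : set W) p v :
  continuous g -> open U -> U p -> g p = 0 -> derivable g p v -> 'D_v g p != 0 ->
  forall d : R, 0 < d -> exists2 r : R, 0 < r & forall z, `|z| < r ->
    exists t, [/\ `|t| <= d, U (t *: v + (z + p)) & g (t *: v + (z + p)) = 0].
Proof.
move=> gc oU Up g0 dg Dv0 d d0.
have /nbhs_normP [rho rho0 ballU] : \forall q \near p, U q.
  exact: open_nbhs_nbhs.
have k0 : 0 < 2 * (`|v| + 1) by rewrite mulr_gt0 // ltr_wpDl.
have [|t0 /andP[t0_gt0 t0_le] neg] :=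
  derive_sign_change g0 dg Dv0 (d := Num.min d (rho / (2 * (`|v| + 1)))).
  by rewrite lt_min d0 divr_gt0.
move: t0_le; rewrite le_min => /andP[t0_d t0_rho].
have [r r0 zero] := zero_crossing_near gc (ltW t0_gt0) neg.
exists (Num.min r (rho / 2)); first by rewrite lt_min r0 divr_gt0.
move=> z; rewrite lt_min => /andP[zr zrho].
have [t /andP[t1 t2] gt] := zero z zr.
have t_t0 : `|t| <= t0 by rewrite ler_norml t1 t2.
exists t; split => //; first exact: le_trans t_t0 t0_d.
apply: ballU; rewrite /= addrCA addrA distrC addrK.
apply: (le_lt_trans (ler_normD _ _)); rewrite normrZ.
rewrite ler_pdivlMr // in t0_rho.
have := normr_ge0 v; have := normr_ge0 t; nra.
Qed.

End DirectionalDerivatives.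

Section NormedLines.
Variables (R : realType) (V : normedModType R).

Lemma small_multiple (e : V) (r : R) : 0 < r -> exists2 t : R, 0 < t & `|t *: e| < r.
Proof.
move=> r0; have e1 : 0 < `|e| + 1 by rewrite ltr_wpDl.
exists (r / (`|e| + 1)); first exact: divr_gt0.
rewrite normrZ gtr0_norm ?divr_gt0 // mulrAC ltr_pdivrMr // ltr_pM2l //.
by rewrite ltrDl.
Qed.

Lemma skips_level_discontinuous (f : V -> R) x e c :
  {for x, continuous f} -> ~ skips_level f x e c.
Proof.
move=> fc [fxc neg pos]; move: fxc; rewrite neq_lt => /orP[fx_lt|fx_gt].
- have : \forall y \near x, f y < c by exact: cvgr_lt _ fc c fx_lt.
  move=> /nbhs_normP [r r0 near_x].
  have [t t0 te] := small_multiple e r0.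
  have := pos t t0; have := near_x (x + t *: e).
  rewrite /= opprD addrA subrr sub0r normrN.
  by move=> /(_ te); lra.
- have : \forall y \near x, c < f y by exact: cvgr_gt _ fc c fx_gt.
  move=> /nbhs_normP [r r0 near_x].
  have [t t0 te] := small_multiple e r0.
  have := neg (- t); have := near_x (x + (- t) *: e).
  rewrite /= opprD addrA subrr sub0r normrN normrZ normrN -normrZ oppr_lt0.
  by move=> /(_ te) ? /(_ t0); lra.
Qed.

Lemma local_solution_continuous (f : V -> R) x0 (s : R) :
  (forall d : R, 0 < d -> exists2 r : R, 0 < r & forall x, `|x - x0| < r ->
     exists t : R, `|t| <= d /\ f x = f x0 + t * s) ->
  {for x0, continuous f}.
Proof.
move=> sol; apply/cvgrPdist_lt => e e0.
have s1 : 0 < `|s| + 1 by rewrite ltr_wpDl.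
have [r r0 near_x0] := sol (e / (`|s| + 1)) (divr_gt0 e0 s1).
apply/nbhs_normP; exists r => // x /= xr.
have [t [td ->]] := near_x0 x ltac:(by rewrite distrC).
rewrite opprD addrA subrr sub0r normrN normrM.
rewrite ler_pdivlMr // in td.
have := normr_ge0 s; have := normr_ge0 t; nra.
Qed.

End NormedLines.

(** * Item response hypersurfaces *)

Section ItemResponseHypersurface.
Variables (R : realType) (n : nat) (M : set ('rV[R]_n * R)) (f : 'rV[R]_n -> R).
Hypotheses (M_irhs : IRHS M) (M_graph : forall x y, M (x, y) <-> y = f x).

Lemma IRHS_monotonic x d : monotonic (fun t => f (x + t *: d)).
Proof.
case: M_irhs => _ _ /(_ d x) [g [g_mono Mg]].
suff -> : (fun t => f (x + t *: d)) = g by [].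
by apply: funext => t; apply/Mg/M_graph.
Qed.

Lemma hypersurface_local_solution x0 (U : set ('rV[R]_n * R))
    (g : 'rV[R]_n * R -> R) u (s : R) :
  open U -> U (x0, f x0) -> continuous g -> (forall q, U q -> (M q <-> g q = 0)) ->
  derivable g (x0, f x0) (u, s) -> 'D_(u, s) g (x0, f x0) != 0 ->
  forall d : R, 0 < d -> exists2 r : R, 0 < r & forall x c,
    `|x - x0| < r -> `|c - f x0| < r ->
    exists t : R, `|t| <= d /\ f (x + t *: u) = c + t * s.
Proof.
move=> oU Up gc UM dg Dg0 d d0.
have g0 : g (x0, f x0) = 0 by apply/UM => //; exact/M_graph.
have [r r0 sol] := local_zero_along gc oU Up g0 dg Dg0 d0.
exists r => // x c xr cr.
have [|t [td Ut gt]] := sol (x - x0, c - f x0).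
  by rewrite prod_normE /= gt_max xr cr.
have : M (t *: (u, s) + ((x - x0, c - f x0) + (x0, f x0))) by apply/UM.
have -> : t *: (u, s) + ((x - x0, c - f x0) + (x0, f x0)) = (x + t *: u, c + t * s).
  by congr pair; rewrite /= subrK addrC.
by move=> /M_graph E; exists t; rewrite E.
Qed.

Lemma IRHS_no_skip x0 e c : ~ skips_level f x0 e c.
Proof.
move=> skip; have [_ hyp _] := M_irhs.
have [U [g [oU Up g_smooth UM [[u s] Dv]]]] := hyp (x0, f x0) (proj2 (M_graph _ _) erefl).
have gc : continuous g := g_smooth 0%N.
have [g_der dg_cont] := g_smooth 1%N.
have Dsplit := derive_dirD g_der dg_cont (x0, f x0) (u, 0) (0, s).
have uss : (u, 0) + (0, s) = (u, s) by congr pair; rewrite /= ?addr0 ?add0r.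
rewrite uss in Dsplit.
have [vert|vert] := eqVneq ('D_(0, s) g (x0, f x0)) 0.
- have hor : 'D_(u, 0) g (x0, f x0) != 0 by move: Dv; rewrite Dsplit vert addr0.
  have [r r0 sol] := hypersurface_local_solution oU Up gc UM (g_der _ _) hor ltr01.
  have [c' skip' c'r] := skipped_level_near IRHS_monotonic skip r0.
  have [t t0 te] := small_multiple e r0.
  have [t1 [_ E1]] := sol (x0 + t *: e) c' ltac:(by rewrite addrAC subrr add0r) c'r.
  have [t2 [_ E2]] :=
    sol (x0 - t *: e) c' ltac:(by rewrite addrAC subrr add0r normrN) c'r.
  rewrite !mulr0 !addr0 in E1 E2.
  exact: (skipped_level_one_side IRHS_monotonic skip' t0 E1 E2).
- apply: (skips_level_discontinuous _ skip).
  apply: (local_solution_continuous (s := s)) => d d0.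
  have [r r0 sol] := hypersurface_local_solution oU Up gc UM (g_der _ _) vert d0.
  exists r => // x xr; have [t [td E]] := sol x (f x0) xr ltac:(by rewrite subrr normr0).
  by exists t; rewrite -E scaler0 addr0.
Qed.

End ItemResponseHypersurface.

Theorem lemma4 (R : realType) (D : nat) (M : set ('rV[R]_D * R))
    (f : 'rV[R]_D -> R) :
  (0 < D)%N ->
  IRHS M ->
  (forall (x : 'rV[R]_D) (y : R), M (x, y) <-> y = f x) ->
  forall w : 'rV[R]_D,
    exists a : 'rV[R]_D,
      a != 0 /\
      forall x y : 'rV[R]_D,
        (x - w) *m a^T = 0 -> (y - w) *m a^T = 0 -> f x = f y.
Proof.
case: D M f => [//|n] M f _ M_irhs M_graph w.
have [a a0 level_a] := level_set_contains_hyperplane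
  (IRHS_monotonic M_irhs M_graph) (IRHS_no_skip M_irhs M_graph) w.
exists a; split => // x y xa ya.
by rewrite level_a ?level_a // /dotr ?xa ?ya mxE.
Qed.
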